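(* Let $p\ge 3$ be a prime. Then there exists a set of $p-1$ mutually orthogonal binary frequency squares of order $2p$.
   Context: A binary frequency square of order $n$ (with $n$ even) is an $n\times n$ array with entries in $\{0,1\}$ such that each of $0$ and $1$ appears exactly $n/2$ times in each row and in each column. Two such squares are orthogonal if, when superimposed, each of the four ordered pairs $(0,0),(0,1),(1,0),(1,1)$ appears the same number of times (namely $n^2/4$). A set of frequency squares is mutually orthogonal if every pair of distinct members is orthogonal. *)

From mathcomp Require Import all_boot.
Set Implicit Arguments. Unset Strict Implicit. Unset Printing Implicit Defensive.

(* A binary square of order n: entry (i,j) in {0,1}, encoded as bool (true = 1). *)
Definition bsquare (n : nat) := {ffun 'I_n * 'I_n -> bool}.

Definition is_binary_freq_square (n : nat) (S : bsquare n) : Prop :=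
  ~~ odd n /\
  (forall i : 'I_n, forall b : bool, #|[set j : 'I_n | S (i, j) == b]| = n %/ 2) /\
  (forall j : 'I_n, forall b : bool, #|[set i : 'I_n | S (i, j) == b]| = n %/ 2).

Definition orthogonal_sq (n : nat) (S T : bsquare n) : Prop :=
  forall a b : bool,
    #|[set c : 'I_n * 'I_n | (S c == a) && (T c == b)]| = n ^ 2 %/ 4.

Definition MOFS (n k : nat) (F : 'I_k -> bsquare n) : Prop :=
  injective F /\
  (forall r : 'I_k, is_binary_freq_square (F r)) /\
  (forall r s : 'I_k, r != s -> orthogonal_sq (F r) (F s)).

(** Rows and columns are indexed by pairs (a, x) and (b, y) in bool * F, where F is a
    finite field of odd characteristic, and [upper] picks one element of each pair
    {z, -z} with z <> 0.  For m <> 0 the square S_m has entry [upper z] where the level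
    z = x + b m^2 + m y is nonzero, and [tiebreak m x (+) a (+) b] where it vanishes.
    With entries read as signs, a 0/1 function is balanced iff its signed sum is 0, and
    two balanced squares are orthogonal iff their xor is balanced as well.
    Along a row, z runs through F once for each b: the signs of the nonzero levels cancel
    since [upper] is odd, and the single zero contributes opposite signs for b = 0, 1.
    Along a column, the bit a flips the zero-level entries, so only nonzero levels count.
    For m <> k, summing over a leaves the product of the two level signs, which cancels
    after an affine change of variables, plus the common zeros of the two levels: (0, 0)
    for b = 0 and (mk, -(m + k)) for b = 1, where the tiebreaks contribute +1 and -1. *)

From mathcomp Require Import all_boot all_algebra.
From mathcomp Require Import ring zify.
Set Implicit Arguments. Unset Strict Implicit. Unset Printing Implicit Defensive.
Import GRing.Theory Num.Theory.
Local Open Scope ring_scope.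

Definition sgb (b : bool) : int := if b then -1 else 1.

Lemma sgb_addb a b : sgb (a (+) b) = sgb a * sgb b.
Proof. by case: a; case: b. Qed.

Section Balanced.
Variable X : finType.

Definition balanced (g : X -> bool) := \sum_x sgb (g x) = 0.

Lemma natr_card_set (P : pred X) : #|[set x | P x]|%:R = \sum_x (P x)%:R :> int.
Proof.
rewrite -sum1_card natr_sum big_mkcond /=.
by apply: eq_bigr => x _; rewrite inE; case: (P x).
Qed.

Lemma natr_card : #|X|%:R = \sum_(x : X) 1 :> int.
Proof. by rewrite -sum1_card natr_sum; apply: eq_bigl => x; rewrite inE. Qed.

Lemma card_balanced g b : balanced g -> (2 * #|[set x | g x == b]|)%N = #|X|.
Proof.
move=> bal_g; apply/eqP; rewrite -(eqr_nat int) natrM natr_card_set natr_card.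
rewrite mulr_sumr (eq_bigr (fun x => 1 + sgb b * sgb (g x))).
  by rewrite big_split /= -mulr_sumr bal_g mulr0 addr0.
by move=> x _; case: (g x); case: b.
Qed.

Lemma card_balanced2 g h a b :
  balanced g -> balanced h -> balanced (fun x => g x (+) h x) ->
  (4 * #|[set x | (g x == a) && (h x == b)]|)%N = #|X|.
Proof.
move=> bal_g bal_h bal_gh; apply/eqP.
rewrite -(eqr_nat int) natrM natr_card_set natr_card mulr_sumr.
rewrite (eq_bigr (fun x => 1 + sgb a * sgb (g x) + sgb b * sgb (h x)
                           + sgb a * sgb b * sgb (g x (+) h x))).
  by rewrite !big_split /= -!mulr_sumr bal_g bal_h bal_gh !mulr0 !addr0.
by move=> x _; case: (g x); case: (h x); case: a; case: b.
Qed.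

End Balanced.

Lemma balanced_comp (A B : finType) (f : A -> B) (g : B -> bool) :
  bijective f -> balanced g -> balanced (g \o f).
Proof.
move=> f_bij; rewrite /balanced (reindex f) //; exact: onW_bij.
Qed.

Lemma balanced_pair (A B : finType) (g : A -> B -> bool) :
  (forall a, balanced (g a)) -> balanced (fun c : A * B => g c.1 c.2).
Proof.
move=> bal_g; rewrite /balanced -(pair_bigA _ (fun a b => sgb (g a b))).
by apply: big1 => a _; exact: bal_g.
Qed.

Lemma eq_balanced (X : finType) (g h : X -> bool) : g =1 h -> balanced g -> balanced h.
Proof. by move=> eq_gh; rewrite /balanced (eq_bigr _ (fun x _ => congr1 sgb (eq_gh x))). Qed.

Section SquareOf.
Variables (X : finType) (n : nat) (e : 'I_n -> X).
Hypothesis e_bij : bijective e.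

Definition square_of (S : X -> X -> bool) : bsquare n := [ffun c => S (e c.1) (e c.2)].

Lemma balanced_lift (P : X * X -> bool) :
  balanced P -> balanced (fun c : 'I_n * 'I_n => P (e c.1, e c.2)).
Proof.
apply: balanced_comp; have [e' eK e'K] := e_bij.
by exists (fun c => (e' c.1, e' c.2)) => -[i j] /=; rewrite ?eK ?e'K.
Qed.

Lemma balanced_square_of S :
  (forall t, balanced (S t)) -> balanced (square_of S).
Proof.
move=> rows; apply: eq_balanced (balanced_lift (balanced_pair rows)).
by move=> c; rewrite ffunE.
Qed.

Lemma freq_square_of S :
  (forall t, balanced (S t)) -> (forall u, balanced (S^~ u)) ->
  is_binary_freq_square (square_of S).
Proof.
move=> rows cols.
have row_card i b : (2 * #|[set j | square_of S (i, j) == b]|)%N = n.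
  rewrite -[RHS]card_ord; apply: card_balanced.
  apply: (@eq_balanced _ (S (e i) \o e)); first by move=> j; rewrite ffunE.
  exact: balanced_comp.
have col_card j b : (2 * #|[set i | square_of S (i, j) == b]|)%N = n.
  rewrite -[RHS]card_ord; apply: card_balanced.
  apply: (@eq_balanced _ (S^~ (e j) \o e)); first by move=> i; rewrite ffunE.
  exact: balanced_comp.
split; last split.
- case: (posnP n) => [-> // | n_gt0].
  by rewrite -(row_card (Ordinal n_gt0) true) oddM.
- by move=> i b; rewrite -[in RHS](row_card i b) mulKn.
- by move=> j b; rewrite -[in RHS](col_card j b) mulKn.
Qed.

Lemma card_square_of2 S T a b :
  (forall t, balanced (S t)) -> (forall t, balanced (T t)) ->
  balanced (fun c : X * X => S c.1 c.2 (+) T c.1 c.2) ->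
  (4 * #|[set c | (square_of S c == a) && (square_of T c == b)]|)%N = (n ^ 2)%N.
Proof.
move=> rowsS rowsT bal_ST.
have -> : (n ^ 2 = #|{: 'I_n * 'I_n}|)%N by rewrite card_prod card_ord mulnn.
apply: card_balanced2; try exact: balanced_square_of.
by apply: eq_balanced (balanced_lift bal_ST) => c; rewrite !ffunE.
Qed.

Lemma MOFS_square_of k (S : 'I_k -> X -> X -> bool) : (0 < n)%N ->
  (forall r t, balanced (S r t)) -> (forall r u, balanced (S r ^~ u)) ->
  (forall r s, r != s -> balanced (fun c : X * X => S r c.1 c.2 (+) S s c.1 c.2)) ->
  MOFS (fun r => square_of (S r)).
Proof.
move=> n_gt0 rows cols orth; split; last split.
- move=> r s eq_rs; apply/eqP/negPn/negP => neq_rs.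
  have := card_square_of2 true false (rows r) (rows s) (orth r s neq_rs).
  rewrite eq_rs (_ : [set c | _ && _] = set0) ?cards0; first by lia.
  by apply/setP => c; rewrite !inE; case: (square_of _ c).
- by move=> r; apply: freq_square_of.
- move=> r s neq_rs a b.
  by rewrite -(card_square_of2 a b (rows r) (rows s) (orth r s neq_rs)) mulKn.
Qed.

End SquareOf.

Lemma sum_pair (A B : finType) (G : A * B -> int) :
  \sum_c G c = \sum_a \sum_b G (a, b).
Proof. by rewrite pair_bigA; apply: eq_bigr => -[]. Qed.

Lemma sum_pred1_pair (I J : finType) (i0 : I) (j0 : J) (G : I -> int) :
  \sum_j \sum_i ((i == i0) && (j == j0))%:R * G i = G i0.
Proof.
rewrite (bigD1 j0) //= [X in _ + X]big1 ?addr0 => [|j /negbTE j_neq]; last first.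
  by apply: big1 => i _; rewrite j_neq andbF mul0r.
rewrite (bigD1 i0) //= !eqxx mul1r big1 ?addr0 // => i /negbTE ->.
by rewrite mul0r.
Qed.

Section AffineSums.
Variable F : finFieldType.

Lemma sum_affine (G : F -> int) (u m : F) :
  m != 0 -> \sum_y G (u + m * y) = \sum_z G z.
Proof.
move=> m_neq0; symmetry; apply: (reindex_inj (h := fun y => u + m * y)).
by move=> y1 y2 /addrI /(mulfI m_neq0).
Qed.

Lemma sum_addr (G : F -> int) (w : F) : \sum_x G (x + w) = \sum_z G z.
Proof. by symmetry; apply: (reindex_inj (h := fun x => x + w)); exact: addIr. Qed.

Lemma sum_odd (f : F -> int) : (forall z, f (- z) = - f z) -> \sum_z f z = 0.
Proof.
move=> fN; have : \sum_z f z = - \sum_z f z.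
  rewrite -sumrN [LHS](reindex_inj (@oppr_inj _)).
  by apply: eq_bigr => z _; rewrite fN.
lia.
Qed.

Lemma sum_eq0_affine (u m : F) : m != 0 -> \sum_y (u + m * y == 0)%:R = 1 :> int.
Proof.
move=> m_neq0; rewrite (sum_affine (fun z => (z == 0)%:R)) //.
by rewrite (bigD1 0) //= eqxx big1 ?addr0 // => z /negbTE ->.
Qed.

End AffineSums.

Section Construction.
Variables (F : finFieldType) (upper : F -> bool).
Hypothesis upperN : forall z, z != 0 -> upper (- z) = ~~ upper z.

Definition hsign (z : F) : int := if z == 0 then 0 else sgb (upper z).

Lemma hsignN z : hsign (- z) = - hsign z.
Proof.
rewrite /hsign oppr_eq0; have [// | z_neq0] := eqVneq z 0.
by rewrite upperN //; case: (upper z).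
Qed.

Lemma sum_hsign_affine u m : m != 0 -> \sum_y hsign (u + m * y) = 0.
Proof. by move=> m_neq0; rewrite (sum_affine hsign) // sum_odd //; exact: hsignN. Qed.

Lemma sum_hsign_addr w : \sum_x hsign (x + w) = 0.
Proof. by rewrite (sum_addr hsign) sum_odd //; exact: hsignN. Qed.

Lemma sum_hsign_pair (m k c d : F) : m != k ->
  \sum_y \sum_x hsign (x + c + m * y) * hsign (x + d + k * y) = 0.
Proof.
move=> neq_mk.
transitivity (\sum_y \sum_x hsign x * hsign ((x + (d - c)) + (k - m) * y)).
  apply: eq_bigr => y _; rewrite -[RHS](sum_addr _ (c + m * y)).
  by apply: eq_bigr => x _; congr (hsign _ * hsign _); ring.
rewrite exchange_big; apply: big1 => x _ /=.
by rewrite -mulr_sumr sum_hsign_affine ?mulr0 // subr_eq0 eq_sym.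
Qed.

Definition level (m x : F) (b : bool) (y : F) : F := x + (if b then m * m else 0) + m * y.

Definition tiebreak (m x : F) : bool := (x != 0) && upper (x / m - m).

Definition entry (m : F) (t u : bool * F) : bool :=
  let z := level m t.2 u.1 u.2 in
  if z == 0 then tiebreak m t.2 (+) t.1 (+) u.1 else upper z.

Lemma sgb_entry m a x b y : sgb (entry m (a, x) (b, y)) =
  hsign (level m x b y) + (level m x b y == 0)%:R * (sgb (tiebreak m x) * sgb a * sgb b).
Proof.
rewrite /entry /hsign; case: (_ == 0); last by rewrite mul0r addr0.
by rewrite !sgb_addb add0r mul1r.
Qed.

Lemma sum_level m x b K : m != 0 ->
  \sum_y (hsign (level m x b y) + (level m x b y == 0)%:R * K) = K.
Proof.
move=> m_neq0; rewrite big_split -mulr_suml /level /=.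
by rewrite sum_hsign_affine // sum_eq0_affine // add0r mul1r.
Qed.

Lemma balanced_entry_row m t : m != 0 -> balanced (entry m t).
Proof.
case: t => a x m_neq0; rewrite /balanced sum_pair big_bool /=.
under eq_bigr do rewrite sgb_entry.
under [X in _ + X]eq_bigr do rewrite sgb_entry.
by rewrite !sum_level //=; ring.
Qed.

Lemma balanced_entry_col m u : balanced ((entry m)^~ u).
Proof.
case: u => b y; rewrite /balanced sum_pair exchange_big /=.
transitivity (2%:R * \sum_x hsign (level m x b y)).
  rewrite mulr_sumr; apply: eq_bigr => x _.
  by rewrite big_bool !sgb_entry /=; ring.
rewrite /level; under eq_bigr do rewrite -addrA.
by rewrite sum_hsign_addr mulr0.
Qed.

Lemma level_common0 m k x b y : m != k ->
  (level m x b y == 0) && (level k x b y == 0) =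
  (x == (if b then m * k else 0)) && (y == (if b then - (m + k) else 0)).
Proof.
move=> neq_mk.
have [level_diff level_y0] :
    level m x b y - level k x b y = (m - k) * (y - (if b then - (m + k) else 0)) /\
    level m x b (if b then - (m + k) else 0) = x - (if b then m * k else 0).
  by rewrite /level; case: b; split; ring.
apply/andP/andP => [[/eqP lm0 /eqP lk0] | [/eqP x_eq /eqP y_eq]].
  have /eqP y_eq : y - (if b then - (m + k) else 0) == 0.
    move: level_diff; rewrite lm0 lk0 subrr => /esym/eqP.
    by rewrite mulf_eq0 subr_eq0 (negbTE neq_mk).
  move: lm0; rewrite -[y](subrK (if b then - (m + k) else 0)) y_eq add0r level_y0.
  by move/eqP; rewrite subr_eq0 => ->; rewrite eqxx.
have lm0 : level m x b y = 0 by rewrite y_eq level_y0 x_eq subrr.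
split; first by rewrite lm0.
by move: level_diff; rewrite lm0 y_eq subrr mulr0 sub0r => /eqP; rewrite oppr_eq0.
Qed.

Lemma tiebreak0 m : tiebreak m 0 = false.
Proof. by rewrite /tiebreak eqxx. Qed.

Lemma tiebreak_common m k : m != 0 -> k != 0 -> m != k ->
  tiebreak m (m * k) = ~~ tiebreak k (m * k).
Proof.
move=> m_neq0 k_neq0 neq_mk; rewrite /tiebreak mulf_neq0 //= mulfK //.
rewrite [m * k]mulrC mulfK // -[m - k]opprB upperN ?negbK //.
by rewrite subr_eq0 eq_sym.
Qed.

Lemma sum_entry_addb_col m k b y :
  \sum_t sgb (entry m t (b, y) (+) entry k t (b, y)) =
  2%:R * (\sum_x hsign (level m x b y) * hsign (level k x b y) +
          \sum_x ((level m x b y == 0) && (level k x b y == 0))%:R *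
                 (sgb (tiebreak m x) * sgb (tiebreak k x))).
Proof.
rewrite sum_pair exchange_big -big_split mulr_sumr; apply: eq_bigr => x _ /=.
rewrite big_bool !sgb_addb !sgb_entry /=.
by case: b; case: (level m x _ y == 0); case: (level k x _ y == 0); rewrite /=; ring.
Qed.

Lemma balanced_entry_orth m k : m != 0 -> k != 0 -> m != k ->
  balanced (fun c : (bool * F) * (bool * F) => entry m c.1 c.2 (+) entry k c.1 c.2).
Proof.
move=> m_neq0 k_neq0 neq_mk.
pose E x := sgb (tiebreak m x) * sgb (tiebreak k x).
have sumP b : \sum_y \sum_x hsign (level m x b y) * hsign (level k x b y) = 0.
  exact: sum_hsign_pair.
have sumQ b : \sum_y \sum_x ((level m x b y == 0) && (level k x b y == 0))%:R * E x =
              E (if b then m * k else 0).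
  rewrite -[RHS](sum_pred1_pair _ (if b then - (m + k) else 0)).
  by apply: eq_bigr => y _; apply: eq_bigr => x _; rewrite level_common0.
rewrite /balanced sum_pair exchange_big sum_pair /=.
under eq_bigr do under eq_bigr do rewrite sum_entry_addb_col.
rewrite big_bool -!mulr_sumr !big_split /= !sumP !sumQ /E tiebreak_common // !tiebreak0.
by case: (tiebreak k _); rewrite /=; ring.
Qed.

End Construction.

Lemma oppr_neq_self (F : fieldType) (z : F) : 2%:R != 0 :> F -> z != 0 -> - z != z.
Proof.
move=> two_neq0 z_neq0; apply/eqP => /(congr1 (+%R z)); rewrite subrr => /esym/eqP.
by rewrite -mulr2n -mulr_natl mulf_eq0 (negbTE two_neq0) (negbTE z_neq0).
Qed.

Local Close Scope ring_scope.

Lemma bij_enum_val_cast (T : finType) n (card_T : #|T| = n) :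
  bijective (fun i : 'I_n => enum_val (cast_ord (esym card_T) i)).
Proof.
exists (fun t => cast_ord card_T (enum_rank t)) => [i | t].
  by rewrite enum_valK cast_ordKV.
by rewrite cast_ordK enum_rankK.
Qed.

Theorem MOFS_finField (F : finFieldType) : (2%:R != 0 :> F)%R ->
  exists G : 'I_#|F|.-1 -> bsquare (2 * #|F|), MOFS G.
Proof.
move=> two_neq0.
pose upper (z : F) := enum_rank (- z)%R < enum_rank z.
have upperN z : z != 0%R -> upper (- z)%R = ~~ upper z.
  move=> z_neq0; rewrite /upper opprK ltnNge leq_eqVlt val_eqE (inj_eq enum_rank_inj).
  by rewrite (negbTE (oppr_neq_self two_neq0 z_neq0)).
have card_units : #|[set~ 0%R : F]| = #|F|.-1 by rewrite cardsC1.
pose m (r : 'I_#|F|.-1) : F := enum_val (cast_ord (esym card_units) r).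
have m_neq0 r : m r != 0%R.
  by have := enum_valP (cast_ord (esym card_units) r); rewrite !inE.
have m_inj : injective m by move=> r s /enum_val_inj/cast_ord_inj.
have card_rows : #|{: bool * F}| = (2 * #|F|)%N by rewrite card_prod card_bool.
exists (fun r => square_of (fun i => enum_val (cast_ord (esym card_rows) i)) (entry upper (m r))).
apply: MOFS_square_of => //; first exact: bij_enum_val_cast.
- by rewrite muln_gt0 /=; apply/card_gt0P; exists 0%R.
- by move=> r t; exact: balanced_entry_row.
- by move=> r u; exact: balanced_entry_col.
- by move=> r s neq_rs; apply: balanced_entry_orth; rewrite ?(inj_eq m_inj).
Qed.

Theorem mainTheorem14 (p : nat) (hp : prime p) (hp3 : 3 <= p) :
  exists F : 'I_(p.-1) -> bsquare (2 * p), MOFS F.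
Proof.
have two_neq0 : (2%:R != 0 :> 'F_p)%R.
  apply/eqP => two_eq0; have := val_Fp_nat hp 2.
  by rewrite two_eq0 modn_small.
by have := MOFS_finField two_neq0; rewrite card_Fp.
Qed.
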